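(* For $m,n,s\in\mathbb{N}$, $${}_{s+1}F_s\left(\{\tfrac12\}^{s},1-n;\{\tfrac32\}^{s};1\right)=\sum_{k=1}^n(-1)^{k-1}\binom{n}{k}\overline{H}_k(s),$$ $${}_{s+1}F_s\left(\{\tfrac12\}^{s},1-n;\{\tfrac32\}^{s};-1\right)=\sum_{k=1}^n(-1)^{k-1}\binom{n}{k}\overline{H}_k(\overline{s}),$$ and $${}_2F_1(1,1-n;m+n;-1)=(m-1)!\,(m+n-1)\sum_{k=1}^n(-1)^{k-1}\binom{n}{k}G_{m,k}.$$
   Context: $\mathbb{N}$ is the set of positive integers; $\{a\}^s$ denotes $a$ repeated $s$ times. $\overline{H}_k(s)=\sum_{j=0}^{k-1}\frac{1}{(2j+1)^s}$, $\overline{H}_k(\overline{s})=\sum_{j=0}^{k-1}\frac{(-1)^j}{(2j+1)^s}$, and $G_{m,k}=\sum_{j=0}^{k-1}\frac{1}{(2j+1)(2j+2)\cdots(2j+m)}$. ${}_{s+1}F_s(a_1,\ldots,a_{s+1};b_1,\ldots,b_s;x)=\sum_{i\geq 0}\frac{(a_1)_i\cdots(a_{s+1})_i}{(b_1)_i\cdots(b_s)_i}\frac{x^i}{i!}$, with $(a)_0=1$, $(a)_i=a(a+1)\cdots(a+i-1)$ for $i>0$ (a finite sum here since $1-n\leq 0$ is an integer). *)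

From HB Require Import structures.
From mathcomp Require Import all_boot all_order all_algebra.
Set Implicit Arguments. Unset Strict Implicit. Unset Printing Implicit Defensive.
Import Order.TTheory GRing.Theory Num.Theory.
Local Open Scope ring_scope.

Definition poch {R : ringType} (a : R) (i : nat) : R :=
  \prod_(k < i) (a + k%:R).

Definition hypterm {R : fieldType} (as_ bs : seq R) (x : R) (i : nat) : R :=
  (\prod_(a <- as_) poch a i) / (\prod_(b <- bs) poch b i) * x ^+ i / (i`!)%:R.

(* When an upper parameter is
   1 - n with n >= 1, all terms with i >= n vanish, so for N >= n this is the
   value of the (terminating) hypergeometric series. *)
Definition hypF {R : fieldType} (as_ bs : seq R) (x : R) (N : nat) : R :=
  \sum_(i < N) hypterm as_ bs x i.

Definition Hbar {R : fieldType} (k s : nat) : R :=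
  \sum_(j < k) 1 / ((2 * j + 1)%:R ^+ s).

Definition Hbar_alt {R : fieldType} (k s : nat) : R :=
  \sum_(j < k) (-1) ^+ j / ((2 * j + 1)%:R ^+ s).

Definition Gmk {R : fieldType} (m k : nat) : R :=
  \sum_(j < k) 1 / (\prod_(1 <= i < m.+1) (2 * j + i)%:R).

(* Since (1 - n)_i = (-1)^i n!/(n - i)!, the three series terminate and their
   i-th terms are (-1)^i C(n-1, i) x^i / (2i+1)^s, resp.
   C(n-1, i) (m+n-1) B(i+1, m+n-1).  The first two identities then follow from
   the inversion formula
     sum_{k=1}^{n} (-1)^(k-1) C(n, k) sum_{j<k} a_j = sum_{j<n} (-1)^j C(n-1, j) a_j.
   For the third, the summands of G_{m,k} are B(2j+1, m)/(m-1)! and the resulting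
   identity between Beta values is obtained by expanding binomially the two sides of
     int_0^1 (1 - x^2)^(n-1) (1 - x)^(m-1) dx = int_0^1 (1 + x)^(n-1) (1 - x)^(m+n-2) dx,
   the integral over [0, 1] being the linear form on polynomials x^a |-> 1/(a+1). *)

From HB Require Import structures.
From mathcomp Require Import all_boot all_order all_algebra.
From mathcomp Require Import ring.
Import Order.TTheory GRing.Theory Num.Theory.
Local Open Scope ring_scope.

Section Pochhammer.
Variable R : comNzRingType.
Implicit Types (a : R) (c i n : nat).

Lemma pochSr a i : poch a i.+1 = poch a i * (a + i%:R).
Proof. by rewrite /poch big_ord_recr. Qed.

Lemma pochSl a i : poch a i.+1 = a * poch (a + 1) i.
Proof.
rewrite /poch big_ord_recl addr0; congr (_ * _).
by apply: eq_bigr => k _; rewrite -natr1 addrAC addrA.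
Qed.

Lemma poch_Nnat n i : poch (- n%:R : R) i = (-1) ^+ i * (n ^_ i)%:R.
Proof.
elim: i => [|i IH]; first by rewrite /poch big_ord0 expr0 mul1r.
rewrite pochSr IH ffactnSr natrM exprS.
have [le_in|lt_ni] := leqP i n; first by rewrite natrB //; ring.
by rewrite ffact_small // !(mul0r, mulr0).
Qed.

Lemma poch_nat_fact c i : c`!%:R * poch (c.+1%:R : R) i = (c + i)`!%:R.
Proof.
elim: i => [|i IH]; first by rewrite /poch big_ord0 mulr1 addn0.
by rewrite pochSr mulrA IH addnS factS natrM -natrD addSn mulrC.
Qed.

Lemma prod_natD_poch c i :
  \prod_(1 <= k < i.+1) (c + k)%:R = poch (c.+1%:R : R) i.
Proof.
rewrite big_add1 /= big_mkord; apply: eq_bigr => k _.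
by rewrite addnS -addSn natrD.
Qed.

End Pochhammer.

Lemma poch_three_halves (R : numFieldType) i :
  poch (3 / 2 : R) i = poch (1 / 2) i * (2 * i + 1)%:R.
Proof.
have half_neq0 : (1 / 2 : R) != 0 by rewrite mul1r invr_eq0 pnatr_eq0.
have := pochSl _ (1 / 2 : R) i; rewrite pochSr.
have -> : (1 / 2 + 1 : R) = 3 / 2 by field.
move=> shift; apply: (mulfI half_neq0).
by rewrite -shift natrD natrM; field.
Qed.

Lemma poch_half_neq0 (R : numFieldType) i : poch (1 / 2 : R) i != 0.
Proof.
rewrite gt_eqF // prodr_gt0 // => k _.
by rewrite ltr_wpDr // mul1r invr_gt0 ltr0n.
Qed.

Section AlternatingBinomialSums.
Variable R : pzRingType.
Implicit Types (j k n : nat) (a : nat -> R).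

Lemma sum_alt_binomial_prefix n j :
  \sum_(k < j.+1) (-1) ^+ k * 'C(n.+1, k)%:R = (-1) ^+ j * 'C(n, j)%:R :> R.
Proof.
elim: j => [|j IH]; first by rewrite big_ord1 !bin0.
rewrite big_ord_recr /= IH binS natrD exprS mulN1r !mulNr mulrDr opprD.
by rewrite addrCA subrr addr0.
Qed.

Lemma sum_alt_binomial_suffix n j : (j <= n)%N ->
  \sum_(k < n.+2 | (j < k)%N) (-1) ^+ (k - 1) * 'C(n.+1, k)%:R
    = (-1) ^+ j * 'C(n, j)%:R :> R.
Proof.
move=> le_jn; pose f k : R := (-1) ^+ k * 'C(n.+1, k)%:R.
have total := sum_alt_binomial_prefix n n.+1; rewrite bin_small // mulr0 in total.
rewrite (bigID (fun k : 'I_n.+2 => (k < j.+1)%N)) /= in total.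
rewrite -(big_ord_widen _ f) in total; last by rewrite ltnS leqW.
rewrite sum_alt_binomial_prefix in total.
have sign_pred k : (j < k)%N -> (-1) ^+ (k - 1) = - (-1) ^+ k :> R.
  by case: k => // k _; rewrite subn1 exprS mulN1r opprK.
rewrite (eq_bigl (fun k : 'I_n.+2 => ~~ (k < j.+1)%N)) => [|k]; last by rewrite ltnNge.
rewrite (eq_bigr (fun k : 'I_n.+2 => - f k)) => [|k]; last first.
  by rewrite -ltnNge => /sign_pred ->; rewrite mulNr.
by rewrite sumrN; apply/eqP; rewrite eq_sym -addr_eq0 total.
Qed.

Lemma sum_alt_binomial_partial_sums n a :
  \sum_(1 <= k < n.+2) (-1) ^+ (k - 1) * 'C(n.+1, k)%:R * (\sum_(j < k) a j)
    = \sum_(j < n.+1) (-1) ^+ j * 'C(n, j)%:R * a j.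
Proof.
transitivity (\sum_(k < n.+2) (-1) ^+ (k - 1) * 'C(n.+1, k)%:R * \sum_(j < k) a j).
  by rewrite big_ord_recl big_ord0 mulr0 add0r big_add1 big_mkord.
under eq_bigr => k _ do rewrite (big_ord_widen n.+1 a (ltn_ord k)) mulr_sumr.
rewrite (exchange_big_dep xpredT) //=; apply: eq_bigr => j _.
by rewrite -mulr_suml sum_alt_binomial_suffix // -ltnS.
Qed.

End AlternatingBinomialSums.

Section PolyIntegral01.
Variable R : fieldType.
Implicit Types (p q : {poly R}).

Definition integral01 p : R := \sum_(i < size p) p`_i / i.+1%:R.

Lemma integral01_widen K p : (size p <= K)%N ->
  integral01 p = \sum_(i < K) p`_i / i.+1%:R.
Proof.
move=> le_pK; rewrite /integral01 -(subnKC le_pK) big_split_ord /=.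
by rewrite [X in _ + X]big1 ?addr0 // => i _; rewrite nth_default ?mul0r ?leq_addr.
Qed.

Lemma integral01_is_scalar : scalar integral01.
Proof.
move=> a p q; pose K := maxn (size p) (size q).
have le_pK : (size p <= K)%N by rewrite leq_maxl.
have le_qK : (size q <= K)%N by rewrite leq_maxr.
have le_sumK : (size (a *: p + q)%R <= K)%N.
  by rewrite (leq_trans (size_polyD _ _)) // geq_max (leq_trans (size_scale_leq _ _)).
rewrite !(integral01_widen K) // mulr_sumr -big_split /=.
by apply: eq_bigr => i _; rewrite coefD coefZ mulrDl mulrA.
Qed.

HB.instance Definition _ :=
  GRing.isLinear.Build R {poly R} R *%R integral01 integral01_is_scalar.

Lemma integral01_Xn a : integral01 'X^a = a.+1%:R^-1.
Proof.
rewrite /integral01 size_polyXn big_ord_recr /= big1 ?add0r => [|i _].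
  by rewrite coefXn eqxx mul1r.
by rewrite coefXn (ltn_eqF (ltn_ord i)) mul0r.
Qed.

End PolyIntegral01.

Arguments integral01 {R} p.

Section BetaIntegral.
Variable R : numFieldType.

(* Euler's [B(a + 1, b + 1)]. *)
Definition beta_nat (a b : nat) : R := (a`! * b`!)%:R / (a + b).+1`!%:R.

Lemma beta_natS a b : beta_nat a b - beta_nat a.+1 b = beta_nat a b.+1.
Proof.
rewrite /beta_nat addSn addnS !factS !natrM -!natr1 !natrD.
have fact_neq0 k : (k`!%:R : R) != 0 by rewrite pnatr_eq0 -lt0n fact_gt0.
by field; rewrite fact_neq0 -natrD !natr1 !pnatr_eq0.
Qed.

Lemma integral01_beta a b : integral01 ('X^a * (1 - 'X) ^+ b) = beta_nat a b.
Proof.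
elim: b a => [|b IH] a.
  rewrite expr0 mulr1 integral01_Xn /beta_nat addn0 fact0 muln1 factS natrM.
  by rewrite invfM mulrA mulrAC divff ?mul1r // pnatr_eq0 -lt0n fact_gt0.
by rewrite exprS mulrA mulrBr mulr1 -exprSr mulrBl raddfB /= !IH beta_natS.
Qed.

Lemma sum_binomial_beta n m :
  \sum_(j < n.+1) (-1) ^+ j * 'C(n, j)%:R * beta_nat (2 * j) m
    = \sum_(i < n.+1) 'C(n, i)%:R * beta_nat i (m + n).
Proof.
have expand_left : integral01 ((- 'X^2 + 1) ^+ n * (1 - 'X) ^+ m)
    = \sum_(j < n.+1) (-1) ^+ j * 'C(n, j)%:R * beta_nat (2 * j) m.
  rewrite exprD1n mulr_suml linear_sum; apply: eq_bigr => j _ /=.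
  rewrite mulrnAl raddfMn /= (exprNn ('X^2 : {poly R})) -exprM.
  rewrite -(rmorph_sign (@polyC R)) mul_polyC.
  by rewrite -scalerAl linearZ /= integral01_beta -mulrA mulr_natl mulrnAr.
have expand_right : integral01 (('X + 1) ^+ n * (1 - 'X) ^+ (m + n))
    = \sum_(i < n.+1) 'C(n, i)%:R * beta_nat i (m + n).
  rewrite exprD1n mulr_suml linear_sum; apply: eq_bigr => i _ /=.
  by rewrite mulrnAl raddfMn /= integral01_beta mulr_natl.
have factor : - 'X^2 + 1 = ('X + 1) * (1 - 'X) :> {poly R}.
  by rewrite addrC -{1}(expr1n {poly R} 2) subr_sqr mulrC (addrC 1 'X).
by rewrite -expand_left -expand_right factor exprMn -mulrA -exprD addnC.
Qed.

End BetaIntegral.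

Lemma prodr_nseq (R : pzSemiRingType) (I : Type) (F : I -> R) s c :
  \prod_(b <- nseq s c) F b = F c ^+ s.
Proof. by rewrite big_nseq iter_mulr_1. Qed.

Lemma hypF_terminating {R : fieldType} n N (as_ bs : seq R) (x : R) :
  - n%:R \in as_ -> (n < N)%N -> hypF as_ bs x N = hypF as_ bs x n.+1.
Proof.
move=> as_n lt_nN; rewrite /hypF -(subnKC lt_nN) big_split_ord /=.
rewrite [X in _ + X]big1 ?addr0 // => i _.
rewrite /hypterm; suff -> : \prod_(a <- as_) poch a (n.+1 + i) = 0 by rewrite !mul0r.
apply/eqP; rewrite prodf_seq_eq0; apply/hasP; exists (- n%:R) => //=.
by rewrite poch_Nnat ffact_small ?mulr0 // ltnS leq_addr.
Qed.

Section HypergeometricTerms.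
Variable R : numFieldType.

Lemma hypterm_half_Nnat s n (x : R) i :
  hypterm (rcons (nseq s (1 / 2)) (- n%:R)) (nseq s (3 / 2)) x i
    = (-1) ^+ i * 'C(n, i)%:R * (x ^+ i / (2 * i + 1)%:R ^+ s).
Proof.
rewrite /hypterm big_rcons /= !prodr_nseq poch_Nnat poch_three_halves exprMn.
rewrite -bin_ffact natrM.
have fact_neq0 : (i`!%:R : R) != 0 by rewrite pnatr_eq0 -lt0n fact_gt0.
have odd_neq0 : ((2 * i + 1)%:R : R) != 0 by rewrite pnatr_eq0 addn1.
by field; rewrite fact_neq0 !expf_neq0 ?poch_half_neq0.
Qed.

Lemma hypterm_one_Nnat n c i :
  hypterm [:: 1; - n%:R] [:: c.+2%:R] (-1 : R) i
    = 'C(n, i)%:R * (c.+1%:R * beta_nat R i c).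
Proof.
have poch1 : poch (1 : R) i = i`!%:R.
  by have := poch_nat_fact R 0 i; rewrite mul1r.
have fact_neq0 k : (k`!%:R : R) != 0 by rewrite pnatr_eq0 -lt0n fact_gt0.
have poch_c : poch (c.+2%:R : R) i = (c.+1 + i)`!%:R / c.+1`!%:R.
  by rewrite -(poch_nat_fact R c.+1 i) mulrAC divff ?mul1r.
rewrite /hypterm !big_cons !big_nil !mulr1 poch1 poch_Nnat poch_c -bin_ffact /beta_nat.
rewrite addSn addnC !factS !natrM -signr_odd.
by case: (odd i); field; rewrite !fact_neq0 -natrD !nat1r !pnatr_eq0.
Qed.

Lemma fact_div_prod_beta m j :
  m`!%:R / \prod_(1 <= i < m.+2) (2 * j + i)%:R = beta_nat R (2 * j) m.
Proof.
rewrite prod_natD_poch /beta_nat -addnS -(poch_nat_fact R (2 * j) m.+1) natrM.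
have fact_neq0 : ((2 * j)`!%:R : R) != 0 by rewrite pnatr_eq0 -lt0n fact_gt0.
by rewrite invfM mulrACA divff ?mul1r.
Qed.

End HypergeometricTerms.

Theorem corollary3p6 (R : realFieldType) (m n s : nat) :
  (0 < m)%N -> (0 < n)%N -> (0 < s)%N ->
  forall N : nat, (n <= N)%N ->
  [/\ hypF (rcons (nseq s (1 / 2 : R)) (1 - n%:R)) (nseq s (3 / 2 : R)) 1 N
        = \sum_(1 <= k < n.+1) (-1) ^+ (k - 1) * 'C(n, k)%:R * Hbar k s,
      hypF (rcons (nseq s (1 / 2 : R)) (1 - n%:R)) (nseq s (3 / 2 : R)) (-1) N
        = \sum_(1 <= k < n.+1) (-1) ^+ (k - 1) * 'C(n, k)%:R * Hbar_alt k s
    & hypF [:: 1; 1 - n%:R] [:: (m + n)%:R] (-1 : R) N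
        = (m.-1)`!%:R * (m + n - 1)%:R *
          \sum_(1 <= k < n.+1) (-1) ^+ (k - 1) * 'C(n, k)%:R * Gmk m k].
Proof.
case: m => // m _; case: n => // n _ _ N lt_nN.
have -> : 1 - n.+1%:R = - n%:R :> R by rewrite -natr1 opprD addrCA subrr addr0.
split.
- rewrite (hypF_terminating n) ?mem_rcons ?mem_head // /Hbar.
  rewrite (sum_alt_binomial_partial_sums _ n (fun j => 1 / (2 * j + 1)%:R ^+ s)).
  by apply: eq_bigr => i _; rewrite hypterm_half_Nnat expr1n.
- rewrite (hypF_terminating n) ?mem_rcons ?mem_head // /Hbar_alt.
  rewrite (sum_alt_binomial_partial_sums _ n (fun j => (-1) ^+ j / (2 * j + 1)%:R ^+ s)).
  by apply: eq_bigr => i _; rewrite hypterm_half_Nnat.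
rewrite (hypF_terminating n) ?inE ?eqxx ?orbT // addSn addnS subn1 /= /Gmk.
rewrite (sum_alt_binomial_partial_sums _ n
  (fun j => 1 / \prod_(1 <= i < m.+2) ((2 * j + i)%:R : R))).
transitivity ((m + n).+1%:R * \sum_(i < n.+1) 'C(n, i)%:R * beta_nat R i (m + n)).
  by rewrite mulr_sumr; apply: eq_bigr => i _; rewrite hypterm_one_Nnat mulrCA.
rewrite -sum_binomial_beta !mulr_sumr; apply: eq_bigr => j _.
rewrite -fact_div_prod_beta; ring.
Qed.
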